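(* Let $R$ be an associative ring with identity, $M$ a left $R$-module and $n\ge0$ an integer. The following are equivalent: (1) $\operatorname{Gpd}_R(M)\le n$; (2) for every integer $t$ with $0\le t\le n$ there exists an exact sequence $0\to X_n\to\cdots\to X_1\to X_0\to M\to 0$ of left $R$-modules such that $X_t$ is Gorenstein projective and $X_i$ is projective for all $i\neq t$.
   Context: A left $R$-module $G$ is Gorenstein projective if there is an exact sequence $\cdots\to P_1\to P_0\to P^0\to P^1\to\cdots$ of projective left $R$-modules which remains exact after applying $\operatorname{Hom}_R(-,P)$ for every projective left $R$-module $P$, and such that $G\cong \operatorname{Im}(P_0\to P^0)$. $\operatorname{Gpd}_R(M)$ is the least $n\ge0$ such that there is an exact sequence $0\to G_n\to\cdots\to G_0\to M\to 0$ with all $G_i$ Gorenstein projective ($\infty$ if none exists). *)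

(* Left R-modules over a (possibly noncommutative) ring R with 1
   are modelled by [lmodType R]; module homomorphisms by [{linear A -> B}]. *)
From HB Require Import structures.
From mathcomp Require Import all_boot all_order all_algebra.
Set Implicit Arguments. Unset Strict Implicit. Unset Printing Implicit Defensive.
Import GRing.Theory.
Local Open Scope ring_scope.

Section Defs.
Variable R : pzRingType.

Definition exact_at (A B C : lmodType R) (f : A -> B) (g : B -> C) : Prop :=
  forall b : B, g b = 0 <-> exists a : A, f a = b.

Definition projective (P : lmodType R) : Prop :=
  forall (A B : lmodType R) (g : {linear A -> B}),
    (forall b : B, exists a : A, g a = b) ->
    forall f : {linear P -> B},
      exists h : {linear P -> A}, forall x : P, g (h x) = f x.

Definition totally_acyclic (P : int -> lmodType R)
    (d : forall i : int, {linear P i -> P (i + 1)}) : Prop :=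
  [/\ forall i : int, projective (P i),
      forall i : int, exact_at (d i) (d (i + 1)) &
      forall Q : lmodType R, projective Q ->
        forall (i : int) (phi : {linear P (i + 1) -> Q}),
          (forall x : P i, phi (d i x) = 0) ->
          exists psi : {linear P (i + 1 + 1) -> Q},
            forall y : P (i + 1), psi (d (i + 1) y) = phi y].

Definition gorenstein_projective (G : lmodType R) : Prop :=
  exists (P : int -> lmodType R) (d : forall i : int, {linear P i -> P (i + 1)}),
    totally_acyclic d /\
    exists h : {linear G -> P 1},
      injective h /\ forall y : P 1, (exists g : G, h g = y) <-> (exists x : P 0, d 0 x = y).

Definition exact_resolution (n : nat) (M : lmodType R) (X : nat -> lmodType R)
    (d : forall k : nat, {linear X k.+1 -> X k}) (e : {linear X 0%N -> M}) : Prop :=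
  [/\ forall k : nat, (n < k)%N -> forall x : X k, x = 0,
      forall m : M, exists x : X 0%N, e x = m,
      exact_at (d 0%N) e &
      forall k : nat, exact_at (d k.+1) (d k)].

Definition Gpd_le (M : lmodType R) (n : nat) : Prop :=
  exists (X : nat -> lmodType R) (d : forall k : nat, {linear X k.+1 -> X k})
         (e : {linear X 0%N -> M}),
    exact_resolution n d e /\ forall i : nat, (i <= n)%N -> gorenstein_projective (X i).

End Defs.

From HB Require Import structures.
From mathcomp Require Import all_boot all_order all_algebra.
From Stdlib Require Import ClassicalEpsilon.
Set Implicit Arguments. Unset Strict Implicit. Unset Printing Implicit Defensive.
Import GRing.Theory.
Local Open Scope ring_scope.

(* The converse direction is immediate since projectives are Gorenstein
   projective. *)

Definition linmap (R : pzRingType) (A B : lmodType R) (f : A -> B)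
  (H : forall a x y, f (a *: x + y) = a *: f x + f y) : {linear A -> B} :=
  HB.pack f (GRing.isLinear.Build R A B *:%R f H).
Arguments linmap {R A B} f H.

Lemma linmapE (R : pzRingType) (A B : lmodType R) f H (x : A) :
  @linmap R A B f H x = f x.
Proof. by []. Qed.

Section Kernel.
Variables (R : pzRingType) (V W : lmodType R) (f : {linear V -> W}).

Definition kernel_pred : {pred V} := fun x => f x == 0.

Lemma kernel_submod_closed : submod_closed kernel_pred.
Proof.
split; first by rewrite unfold_in /= linear0.
by move=> a x y; rewrite !unfold_in /= linearP => /eqP -> /eqP ->; rewrite scaler0 addr0.
Qed.

HB.instance Definition _ :=
  GRing.isSubmodClosed.Build R V kernel_pred kernel_submod_closed.
Definition ker := {x : V | x \in kernel_pred}.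
HB.instance Definition _ := [isSub for (@sval V (fun x => x \in kernel_pred)) : ker -> V].
HB.instance Definition _ := [Choice of ker by <:].
HB.instance Definition _ := [SubChoice_isSubLmodule of ker by <:].

Definition ker_incl : {linear ker -> V} :=
  GRing.Linear.clone _ _ _ _ (val : ker -> V) _.

Lemma ker_incl_inj : injective ker_incl. Proof. exact: val_inj. Qed.

Lemma ker_inclK (k : ker) : f (ker_incl k) = 0.
Proof. exact/eqP/(valP k). Qed.

Lemma ker_incl_image (x : V) : (exists k : ker, ker_incl k = x) <-> f x = 0.
Proof.
split=> [[k <-]|fx0]; first exact: ker_inclK.
have xin : x \in kernel_pred by rewrite unfold_in /=; apply/eqP.
by exists (exist _ x xin : ker).
Qed.
End Kernel.

Section LinearMaps.
Variable R : pzRingType.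
Implicit Types A B C : lmodType R.

(* A total, functional and linear relation is the graph of a linear map;
   this is how maps defined "by choice of preimages" are built. *)
Lemma linear_of_rel A B (Rel : A -> B -> Prop) :
  (forall a, exists b, Rel a b) ->
  (forall a b b', Rel a b -> Rel a b' -> b = b') ->
  (forall k a a' b b', Rel a b -> Rel a' b' -> Rel (k *: a + a') (k *: b + b')) ->
  exists f : {linear A -> B}, forall a, Rel a (f a).
Proof.
move=> Rtotal Rfun Rlin.
pose g a := proj1_sig (constructive_indefinite_description _ (Rtotal a)).
have Rg a : Rel a (g a) by rewrite /g; case: constructive_indefinite_description.
have g_lin k x y : g (k *: x + y) = k *: g x + g y.
  by apply: (Rfun (k *: x + y)); [apply: Rg | apply: Rlin; apply: Rg].
by exists (linmap _ g_lin).
Qed.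

Lemma factor_through_mono A B C (m : {linear B -> C}) (g : {linear A -> C}) :
  injective m -> (forall x, exists b, m b = g x) ->
  exists h : {linear A -> B}, forall x, m (h x) = g x.
Proof.
move=> m_inj g_im; apply: (linear_of_rel (Rel := fun x b => m b = g x)) => //.
- by move=> x b b' E E'; apply: m_inj; rewrite E E'.
- by move=> k x x' b b' E E'; rewrite !linearP E E'.
Qed.

Lemma factor_through_epi A B C (e : {linear A -> B}) (g : {linear A -> C}) :
  (forall b, exists a, e a = b) -> (forall a, e a = 0 -> g a = 0) ->
  exists h : {linear B -> C}, forall a, h (e a) = g a.
Proof.
move=> e_surj g_ker.
have g_eq a a' : e a = e a' -> g a = g a'.
  move=> E; apply/eqP; rewrite -subr_eq0 -linearB; apply/eqP/g_ker.
  by rewrite linearB E subrr.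
have [h Hh] : exists h : {linear B -> C}, forall b, exists a, e a = b /\ g a = h b.
  apply: (linear_of_rel (Rel := fun b c => exists a, e a = b /\ g a = c)).
  - by move=> b; have [a Ea] := e_surj b; exists (g a), a.
  - by move=> b c c' [a [Ea <-]] [a' [Ea' <-]]; apply: g_eq; rewrite Ea Ea'.
  - move=> k b b' c c' [a [Ea <-]] [a' [Ea' <-]].
    by exists (k *: a + a'); rewrite !linearP Ea Ea'.
exists h => a; have [a' [Ea' <-]] := Hh (e a); exact: g_eq.
Qed.

Lemma linear_inverse A B (f : {linear A -> B}) :
  injective f -> (forall b, exists a, f a = b) ->
  exists g : {linear B -> A}, forall b, f (g b) = b.
Proof.
move=> f_inj f_surj; apply: (linear_of_rel (Rel := fun b a => f a = b)) => //.
- by move=> b a a' E E'; apply: f_inj; rewrite E E'.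
- by move=> k b b' a a' <- <-; rewrite linearP.
Qed.

Definition idL A : {linear A -> A} := linmap (fun x : A => x) (fun _ _ _ => erefl).

Lemma zero_linear A B k (x y : A) : (0 : B) = k *: 0 + 0.
Proof. by rewrite scaler0 addr0. Qed.
Definition zeroL A B : {linear A -> B} := linmap (fun _ : A => (0 : B)) (@zero_linear A B).

Lemma comp_linear A B C (g : {linear B -> C}) (f : {linear A -> B}) k x y :
  g (f (k *: x + y)) = k *: g (f x) + g (f y).
Proof. by rewrite !linearP. Qed.
Definition compL A B C (g : {linear B -> C}) (f : {linear A -> B}) : {linear A -> C} :=
  linmap (fun x => g (f x)) (comp_linear g f).

Lemma pair_linear A B C (f : {linear A -> B}) (g : {linear A -> C}) k (x y : A) :
  (f (k *: x + y), g (k *: x + y)) = k *: (f x, g x) + (f y, g y).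
Proof. by rewrite !linearP. Qed.
Definition pairL A B C (f : {linear A -> B}) (g : {linear A -> C}) :
  {linear A -> (B * C)%type} := linmap (fun x => (f x, g x)) (pair_linear f g).

Lemma copair_linear A B C (f : {linear A -> C}) (g : {linear B -> C}) k (z z' : (A * B)%type) :
  f (k *: z + z').1 + g (k *: z + z').2 = k *: (f z.1 + g z.2) + (f z'.1 + g z'.2).
Proof. by rewrite /= !linearP scalerDr addrACA. Qed.
Definition copairL A B C (f : {linear A -> C}) (g : {linear B -> C}) :
  {linear (A * B)%type -> C} := linmap (fun z => f z.1 + g z.2) (copair_linear f g).

Definition inlL A B : {linear A -> (A * B)%type} := pairL (idL A) (zeroL A B).
Definition inrL A B : {linear B -> (A * B)%type} := pairL (zeroL B A) (idL B).
Definition fstL A B : {linear (A * B)%type -> A} := linmap fst (fun _ _ _ => erefl).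
Definition sndL A B : {linear (A * B)%type -> B} := linmap snd (fun _ _ _ => erefl).

Lemma linear_prod_split A B C (h : {linear (A * B)%type -> C}) a b :
  h (a, b) = h (a, 0) + h (0, b).
Proof.
rewrite -linearD; congr (h _).
by apply: injective_projections; rewrite /= ?addr0 ?add0r.
Qed.

End LinearMaps.

Definition short_exact (R : pzRingType) (A B C : lmodType R)
    (i : {linear A -> B}) (p : {linear B -> C}) : Prop :=
  [/\ injective i, forall c, exists b, p b = c & forall b, p b = 0 <-> exists a, i a = b].

Lemma short_exact_comp (R : pzRingType) (A B C : lmodType R)
    (i : {linear A -> B}) (p : {linear B -> C}) a :
  short_exact i p -> p (i a) = 0.
Proof. by case=> _ _ ex; apply/ex; exists a. Qed.

Lemma kernel_short_exact (R : pzRingType) (A B : lmodType R) (f : {linear A -> B}) :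
  (forall b, exists a, f a = b) -> short_exact (ker_incl f) f.
Proof. by move=> f_surj; split=> // [|x]; [exact: ker_incl_inj | rewrite ker_incl_image]. Qed.

Section Projective.
Variable R : pzRingType.
Implicit Types A B P : lmodType R.

(* Projectives lift maps along any map whose image contains theirs
   (not only along epimorphisms): lift the identity along the projection
   of the pullback onto [P]. *)
Lemma projective_lift P A B (g : {linear A -> B}) (f : {linear P -> B}) :
  projective P -> (forall x, exists a, g a = f x) ->
  exists h : {linear P -> A}, forall x, g (h x) = f x.
Proof.
move=> projP f_im.
have F_lin k (z z' : (A * P)%type) :
    g (k *: z + z').1 - f (k *: z + z').2 = k *: (g z.1 - f z.2) + (g z'.1 - f z'.2).
  by rewrite /= (linearP g) (linearP f) opprD addrACA scalerBr.
pose F := linmap _ F_lin.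
pose pr := compL (sndL A P) (ker_incl F).
have [s Hs] : exists s : {linear P -> ker F}, forall x, pr (s x) = idL P x.
  apply: projP => x; have [a Ea] := f_im x.
  have /ker_incl_image [k Ek] : F (a, x) = 0 by rewrite linmapE /= Ea subrr.
  by exists k; rewrite [pr k]linmapE Ek.
exists (compL (fstL A P) (compL (ker_incl F) s)) => x.
set v := ker_incl F (s x).
have v2 : v.2 = x by exact: Hs x.
have : g v.1 = f v.2.
  by apply/eqP; rewrite -subr_eq0; apply/eqP; have := ker_inclK (s x); rewrite linmapE.
by rewrite v2 => <-.
Qed.

Lemma projective_prod A B : projective A -> projective B -> projective (A * B)%type.
Proof.
move=> projA projB U V g g_surj f.
have [hA HA] := projA U V g g_surj (compL f (inlL A B)).
have [hB HB] := projB U V g g_surj (compL f (inrL A B)).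
by exists (copairL hA hB) => -[a b]; rewrite [f _]linear_prod_split /= linearD HA HB.
Qed.

End Projective.

Definition cast_idx (S : int -> Type) (i j : int) (e : i = j) (x : S i) : S j :=
  eq_rect i S x j e.

Lemma cast_idx_id (S : int -> Type) i (e : i = i) (x : S i) : cast_idx e x = x.
Proof. by rewrite (eq_irrelevance e erefl). Qed.

Lemma cast_idx_comp (S : int -> Type) i j k (e : i = j) (e' : j = k) (x : S i) :
  cast_idx e' (cast_idx e x) = cast_idx (etrans e e') x.
Proof. by case: k / e'; case: j / e. Qed.

Lemma cast_idx_dep (S : int -> Type) (f : forall j, S j) i j (e : i = j) :
  f j = cast_idx e (f i).
Proof. by case: j / e. Qed.

Lemma NegzS_add1 (m : nat) : Negz m.+1 + 1 = Negz m.
Proof. by rewrite !NegzE -[m.+2]addn1 PoszD opprD addrNK. Qed.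

Lemma Posz_add1 (m : nat) : Posz m + 1 = Posz m.+1.
Proof. by rewrite -addn1 PoszD. Qed.

Lemma odd_absz_add1 (i : int) : odd (absz (i + 1)) = ~~ odd (absz i).
Proof. by case: i => [n|[|m]] //=; rewrite ?addn1 // subn1 negbK. Qed.

(* Bidirectional recursion over the integers: starting from [s0], a step
   [up] from [j] to [j + 1] and a step [down] from [j + 1] to [j], each
   producing a [Link]ed pair, yield a family over all of [int] whose
   consecutive members are linked. *)
Section IntRecursion.
Variables (S : int -> Type) (Link : forall j, S j -> S (j + 1) -> Prop).
Variables (s0 : S 0) (up : forall j, S j -> S (j + 1)) (down : forall j, S (j + 1) -> S j).
Hypothesis up_link : forall j (x : S j), Link x (up x).
Hypothesis down_link : forall j (y : S (j + 1)), Link (down y) y.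

Fixpoint rec_pos (m : nat) : S (Posz m) :=
  match m with 0 => s0 | m'.+1 => cast_idx (Posz_add1 m') (up (rec_pos m')) end.
Fixpoint rec_neg (m : nat) : S (Negz m) :=
  match m with
  | 0 => down (cast_idx (erefl : (0 : int) = Negz 0 + 1) s0)
  | m'.+1 => down (cast_idx (esym (NegzS_add1 m')) (rec_neg m'))
  end.
Definition rec_int (j : int) : S j :=
  match j with Posz m => rec_pos m | Negz m => rec_neg m end.

Lemma int_recursion :
  exists s : forall j, S j, s 0 = s0 /\ forall j, Link (s j) (s (j + 1)).
Proof.
exists rec_int; split => // [[m|[|m]]].
- rewrite (cast_idx_dep rec_int (esym (Posz_add1 m))) /= cast_idx_comp cast_idx_id.
  exact: up_link.
- rewrite (cast_idx_dep rec_int (erefl : (0 : int) = Negz 0 + 1)) /=; exact: down_link.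
- rewrite (cast_idx_dep rec_int (esym (NegzS_add1 m))) /=; exact: down_link.
Qed.
End IntRecursion.

Section GorensteinBasics.
Variable R : pzRingType.

Definition castL (P : int -> lmodType R) i j (e : i = j) : {linear P i -> P j} :=
  cast_idx (S := fun j => {linear P i -> P j}) e (idL (P i)).

Lemma castL_inj (P : int -> lmodType R) i j (e : i = j) : injective (castL P e).
Proof. by case: j / e. Qed.

Lemma image_castL (P : int -> lmodType R) k k' (e : k = k') (A B : Type)
  (u : A -> P k) (v : B -> P k) :
  (forall z, (exists a, u a = z) <-> (exists b, v b = z)) ->
  forall y, (exists a, castL P e (u a) = y) <-> (exists b, castL P e (v b) = y).
Proof. by case: k' / e. Qed.

Section Shift.
Variables (P : int -> lmodType R) (d : forall i : int, {linear P i -> P (i + 1)}).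

Lemma exact_cast : (forall i, exact_at (d i) (d (i + 1))) ->
  forall j j' (e : j + 1 = j') (b : P j'),
    d j' b = 0 <-> exists a : P j, castL P e (d j a) = b.
Proof. by move=> d_ex j j' e; case: j' / e => b; exact: d_ex. Qed.

Lemma hom_exact_cast :
  (forall Q : lmodType R, projective Q ->
    forall (i : int) (phi : {linear P (i + 1) -> Q}),
      (forall x : P i, phi (d i x) = 0) ->
      exists psi : {linear P (i + 1 + 1) -> Q},
        forall y : P (i + 1), psi (d (i + 1) y) = phi y) ->
  forall Q : lmodType R, projective Q ->
  forall j j' (e : j + 1 = j') j'' (e' : j' + 1 = j'') (phi : {linear P j' -> Q}),
    (forall x, phi (castL P e (d j x)) = 0) ->
    exists psi : {linear P j'' -> Q}, forall y, psi (castL P e' (d j' y)) = phi y.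
Proof.
by move=> d_hom Q projQ j j' e; case: j' / e => j'' e'; case: j'' / e'; exact: d_hom.
Qed.

Lemma image_cast j j' (e : j = j') k (e1 : j + 1 = k) (e2 : j' + 1 = k) y :
  (exists x : P j, castL P e1 (d j x) = y) <-> (exists x : P j', castL P e2 (d j' x) = y).
Proof. by case: j' / e e2 => e2; rewrite (eq_irrelevance e1 e2). Qed.

Lemma shift_idx (s i : int) : i + s + 1 = i + 1 + s.
Proof. by rewrite addrAC. Qed.

Definition shifted (s i : int) : {linear P (i + s) -> P (i + 1 + s)} :=
  compL (castL P (shift_idx s i)) (d (i + s)).

Lemma shifted_totally_acyclic s : totally_acyclic d -> totally_acyclic (shifted s).
Proof.
case=> d_proj d_ex d_hom; split.
- by move=> i; exact: d_proj.
- move=> i b; rewrite /shifted linmapE; split.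
  + move=> b0; have : d (i + 1 + s) b = 0.
      by apply: (castL_inj (e := shift_idx s (i + 1))); rewrite b0 linear0.
    by move/(exact_cast d_ex (shift_idx s i)) => [a Ea]; exists a; rewrite linmapE.
  + case=> a; rewrite linmapE => Ea.
    have : d (i + 1 + s) b = 0 by apply/(exact_cast d_ex (shift_idx s i)); exists a.
    by move->; rewrite linear0.
- move=> Q projQ i phi phi0.
  have [psi Hpsi] := hom_exact_cast d_hom projQ (e := shift_idx s i) (shift_idx s (i + 1)) phi0.
  by exists psi => y; rewrite /shifted linmapE.
Qed.

Lemma gp_of_image s (G : lmodType R) (h : {linear G -> P (s + 1)}) :
  totally_acyclic d -> injective h ->
  (forall y, (exists g, h g = y) <-> exists x : P s, d s x = y) ->
  gorenstein_projective G.
Proof.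
move=> TA h_inj h_im.
exists (fun i => P (i + s)), (shifted s); split; first exact: shifted_totally_acyclic.
have e1 : s + 1 = 1 + s by rewrite addrC.
exists (compL (castL P e1) h); split.
  by move=> x y; rewrite !linmapE => /castL_inj /h_inj.
move=> y.
have -> : (exists x : P (0 + s), shifted s 0 x = y) <->
          (exists x : P s, castL P e1 (d s x) = y).
  have e0 : s = 0 + s by rewrite add0r.
  by rewrite /shifted; symmetry; apply: (image_cast e0 e1 (shift_idx s 0) y).
exact: (image_castL e1 h_im y).
Qed.
End Shift.

(* A projective module is Gorenstein projective: it is the image of the
   identity in the complex  ... -> Q --0--> Q --id--> Q --0--> Q -> ... *)
Lemma projective_gp (Q : lmodType R) : projective Q -> gorenstein_projective Q.
Proof.
move=> projQ.
pose d (i : int) : {linear Q -> Q} := if odd (absz i) then zeroL Q Q else idL Q.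
have dE i x : d i x = if odd (absz i) then 0 else x by rewrite /d; case: ifP.
exists (fun _ => Q), d; split; last first.
  exists (idL Q); split; first by move=> x y.
  by move=> y; split=> -[x Hx]; exists x; rewrite -Hx ?dE.
split => //.
- move=> i b; case odd_i: (odd (absz i)).
  + have d_i a : d i a = 0 by rewrite dE odd_i.
    rewrite dE odd_absz_add1 odd_i /=; split; first by move->; exists 0; exact: d_i.
    by case=> a; rewrite d_i.
  + have d_i a : d i a = a by rewrite dE odd_i.
    by rewrite dE odd_absz_add1 odd_i /=; split => // _; exists b; rewrite d_i.
- move=> Q0 projQ0 i phi phi0; case odd_i: (odd (absz i)).
  + by exists phi => y; rewrite dE odd_absz_add1 odd_i.
  + by exists (zeroL Q Q0) => y; rewrite linmapE -(phi0 y) dE odd_i.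
Qed.

Lemma gp_iso (G G' : lmodType R) (f : {linear G -> G'}) :
  injective f -> (forall y, exists x, f x = y) ->
  gorenstein_projective G -> gorenstein_projective G'.
Proof.
move=> f_inj f_surj [P [d [TA [h [h_inj h_im]]]]].
have [g fgK] := linear_inverse f_inj f_surj.
have gfK x : g (f x) = x by apply: f_inj; rewrite fgK.
exists P, d; split => //; exists (compL h g); split.
  by move=> y y' /h_inj E; rewrite -[y]fgK -[y']fgK; congr (f _).
move=> y; rewrite -h_im; split=> -[x <-]; first by exists (g x).
by exists (f x); rewrite linmapE gfK.
Qed.

Lemma gp_data (G : lmodType R) : gorenstein_projective G ->
  exists (P : int -> lmodType R) (d : forall i : int, {linear P i -> P (i + 1)})
    (h : {linear G -> P 1}) (p : {linear P 0 -> G}),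
  [/\ totally_acyclic d, injective h, (forall x, h (p x) = d 0 x),
      (forall g, exists x, p x = g) &
      forall y, d 1 y = 0 <-> exists g, h g = y].
Proof.
case=> P [d [[d_proj d_ex d_hom] [h [h_inj h_im]]]].
have [p Hp] : exists p : {linear P 0 -> G}, forall x, h (p x) = d 0 x.
  by apply: factor_through_mono => // x; apply/h_im; exists x.
exists P, d, h, p; split => //.
- move=> g; have [x Hx] := (h_im (h g)).1 (ex_intro _ g erefl).
  by exists x; apply: h_inj; rewrite Hp.
- by move=> y; rewrite h_im; exact: (d_ex 0 y).
Qed.

Lemma gp_syzygy (G : lmodType R) : gorenstein_projective G ->
  exists (P0 L : lmodType R) (i : {linear L -> P0}) (p : {linear P0 -> G}),
    [/\ projective P0, gorenstein_projective L & short_exact i p].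
Proof.
move=> /gp_data [P [d [h [p [[d_proj d_ex d_hom] h_inj hp p_surj _]]]]].
exists (P 0), (ker p), (ker_incl p), p; split => //.
- apply: (gp_of_image (s := -1) (h := ker_incl p)) => //; first exact: ker_incl_inj.
  move=> y; rewrite ker_incl_image -(d_ex (-1)) -hp.
  by split => [->|hp0]; [rewrite linear0 | apply: h_inj; rewrite hp0 linear0].
- exact: kernel_short_exact.
Qed.

Lemma gp_cosyzygy (G : lmodType R) : gorenstein_projective G ->
  exists (Q G' : lmodType R) (i : {linear G -> Q}) (p : {linear Q -> G'}),
    [/\ projective Q, gorenstein_projective G' & short_exact i p].
Proof.
move=> /gp_data [P [d [h [p [[d_proj d_ex d_hom] h_inj hp p_surj h_im]]]]].
have d2d1 (q : P 1) : d (1 + 1) (d 1 q) = 0 by apply/(d_ex 1); exists q.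
have [c Hc] : exists c : {linear P 1 -> ker (d (1 + 1))}, forall q, ker_incl _ (c q) = d 1 q.
  apply: factor_through_mono; first exact: ker_incl_inj.
  by move=> q; apply/ker_incl_image.
exists (P 1), (ker (d (1 + 1))), h, c; split => //.
- apply: (gp_of_image (s := 1) (h := ker_incl (d (1 + 1)))) => //.
    exact: ker_incl_inj.
  by move=> y; rewrite ker_incl_image; exact: d_ex.
- split => // [y|q].
    have [q Hq] := (d_ex 1 (ker_incl _ y)).1 (ker_inclK y).
    by exists q; apply: ker_incl_inj; rewrite Hc.
  rewrite -h_im -Hc; split => [->|]; first exact: linear0.
  by rewrite -(linear0 (ker_incl (d (1 + 1)))) => /ker_incl_inj.
Qed.

(* Writing
   [B] as a quotient of [P 0 * A] (for a complete resolution [P] of [C]),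
   the extension is assembled from a map [P 0 -> Q] obtained by
   Hom-exactness of [P]. *)
Lemma gp_extend (A B C Q : lmodType R) (i : {linear A -> B}) (p : {linear B -> C}) :
  short_exact i p -> gorenstein_projective C -> projective Q ->
  forall f : {linear A -> Q}, exists g : {linear B -> Q}, forall a, g (i a) = f a.
Proof.
move=> [i_inj p_surj p_ex] /gp_data [P [d [h [q [[d_proj d_ex d_hom] h_inj hq q_surj _]]]]].
move=> projQ f.
have q_ker y : q y = 0 <-> exists z, d (-1) z = y.
  rewrite -(d_ex (-1)) -hq; split => [->|]; first exact: linear0.
  by rewrite -(linear0 h) => /h_inj.
have [beta Hbeta] : exists beta : {linear P 0 -> B}, forall y, p (beta y) = q y.
  by apply: projective_lift => // y; exact: p_surj.
have [phi Hphi] : exists phi : {linear P (-1) -> A},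
    forall z, i (phi z) = beta (d (-1) z).
  apply: (factor_through_mono (g := compL beta (d (-1)))) => // z.
  by apply/p_ex; rewrite Hbeta; apply/q_ker; exists z.
have [psi Hpsi] : exists psi : {linear P 0 -> Q},
    forall z, psi (d (-1) z) = f (phi z).
  apply: (d_hom Q projQ (-2) (compL f phi)) => x; rewrite linmapE.
  have dd : d (-1) (d (-2) x) = 0 by apply/(d_ex (-2)); exists x.
  have -> : phi (d (-2) x) = 0 by apply: i_inj; rewrite Hphi dd !linear0.
  exact: linear0.
pose e := copairL beta i.
have e_surj b : exists z, e z = b.
  have [y Hy] := q_surj (p b).
  have /p_ex [a Ha] : p (b - beta y) = 0 by rewrite linearB /= Hbeta Hy subrr.
  by exists (y, a); rewrite linmapE /= Ha addrC subrK.
have e_ker z : e z = 0 -> copairL psi f z = 0.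
  case: z => y a; rewrite !linmapE /= => yaE.
  have /q_ker [z Hz] : q y = 0.
    have pia : p (i a) = 0 by apply/p_ex; exists a.
    by rewrite -Hbeta -(linear0 p) -yaE linearD pia addr0.
  have a_phi : a = - phi z.
    by apply: i_inj; apply/eqP; rewrite linearN -addr_eq0 Hphi Hz addrC yaE.
  by rewrite -Hz Hpsi a_phi linearN subrr.
have [g Hg] := factor_through_epi e_surj e_ker.
exists g => a; have := Hg (0, a); rewrite !linmapE /= !linear0 !add0r; exact.
Qed.

(* Given complexes
   [dA], [dC] and maps [th j : PC j -> PA (j + 1)] with
   [dA (j + 1) \o th j + th (j + 1) \o dC j = 0], the maps
   [(a, c) |-> (dA a + th c, dC c)] form a complex [PA * PC] which is
   totally acyclic whenever [dA] and [dC] are.  This is how complete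
   resolutions of the ends of a short exact sequence are glued into one
   of the middle term. *)
Section TwistedSum.
Variables (PA PC : int -> lmodType R).
Variables (dA : forall i : int, {linear PA i -> PA (i + 1)}).
Variables (dC : forall i : int, {linear PC i -> PC (i + 1)}).
Hypotheses (TA_A : totally_acyclic dA) (TA_C : totally_acyclic dC).

Definition twisting (j : int) := {linear PC j -> PA (j + 1)}.

Definition twist_compatible (j : int) (x : twisting j) (y : twisting (j + 1)) : Prop :=
  forall z : PC j, dA (j + 1) (x z) + y (dC j z) = 0.

Lemma dA_dA j (x : PA j) : dA (j + 1) (dA j x) = 0.
Proof. by case: TA_A => _ ex _; apply/ex; exists x. Qed.

Lemma dC_dC j (x : PC j) : dC (j + 1) (dC j x) = 0.
Proof. by case: TA_C => _ ex _; apply/ex; exists x. Qed.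

(* A compatible twisting extends one step up, by Hom-exactness of [PC]
   against the projective [PA]... *)
Lemma twist_up j (x : twisting j) (y : twisting (j + 1)) :
  twist_compatible x y -> exists w : twisting (j + 1 + 1), twist_compatible y w.
Proof.
case: TA_A TA_C => projA _ _ [_ _ homC] xy.
pose g := compL (dA (j + 1 + 1)) y.
have g0 z : (\- g : {linear _ -> _}) (dC j z) = 0.
  have := congr1 (dA (j + 1 + 1)) (xy z).
  by rewrite linearD dA_dA add0r linear0 /= => ->; rewrite oppr0.
have [w Hw] := homC _ (projA _) j _ g0.
by exists w => z; rewrite Hw /= subrr.
Qed.

(* ... and one step down, by lifting along [dA] from the projective [PC]. *)
Lemma twist_down j (y : twisting (j + 1)) (w : twisting (j + 1 + 1)) :
  twist_compatible y w -> exists x : twisting j, twist_compatible x y.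
Proof.
case: TA_A TA_C => _ exA _ [projC _ _] yw.
have [x Hx] : exists x : twisting j, forall z, dA (j + 1) (x z) = - y (dC j z).
  apply: (projective_lift (f := \- compL y (dC j) : {linear _ -> _})) => // z.
  apply/exA; rewrite /= linearN.
  by have := yw (dC j z); rewrite dC_dC linear0 addr0 => ->; rewrite oppr0.
by exists x => z; rewrite Hx addNr.
Qed.

Lemma twist_family (th0 : twisting 0) (th1 : twisting (0 + 1)) :
  twist_compatible th0 th1 ->
  exists th : forall j, twisting j,
    th 0 = th0 /\ forall j, twist_compatible (th j) (th (j + 1)).
Proof.
move=> th01.
pose S (j : int) := {xy : twisting j * twisting (j + 1) | twist_compatible xy.1 xy.2}.
pose up (j : int) (s : S j) : S (j + 1) :=
  let w := constructive_indefinite_description _ (twist_up (proj2_sig s)) in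
  exist _ ((proj1_sig s).2, proj1_sig w) (proj2_sig w).
pose down (j : int) (s : S (j + 1)) : S j :=
  let x := constructive_indefinite_description _ (twist_down (proj2_sig s)) in
  exist _ (proj1_sig x, (proj1_sig s).1) (proj2_sig x).
have [s [s0 s_link]] := @int_recursion S
  (fun j (x : S j) (y : S (j + 1)) => (proj1_sig x).2 = (proj1_sig y).1)
  (exist _ (th0, th1) th01) up down (fun _ _ => erefl) (fun _ _ => erefl).
exists (fun j => (proj1_sig (s j)).1); split; first by rewrite s0.
by move=> j; rewrite -(s_link j); exact: (proj2_sig (s j)).
Qed.

Variable th : forall j, twisting j.
Hypothesis th_compat : forall j, twist_compatible (th j) (th (j + 1)).

Definition twisted (j : int) :
    {linear (PA j * PC j)%type -> (PA (j + 1) * PC (j + 1))%type} :=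
  pairL (copairL (dA j) (th j)) (compL (dC j) (sndL (PA j) (PC j))).

Lemma twistedE j a c : twisted j (a, c) = (dA j a + th j c, dC j c).
Proof. by []. Qed.

Lemma twisted_totally_acyclic : totally_acyclic twisted.
Proof.
case: TA_A TA_C => projA exA homA [projC exC homC]; split.
- by move=> j; exact: projective_prod.
- move=> j [a c]; rewrite twistedE; split.
  + case/pair_equal_spec => ac0 /(exC j) [c' Ec'].
    have dAth : dA (j + 1) (th j c') = - th (j + 1) c.
      by apply/eqP; rewrite -addr_eq0 -Ec' th_compat.
    have /(exA j) [a' Ea'] : dA (j + 1) (a - th j c') = 0.
      by rewrite linearB dAth opprK.
    by exists (a', c'); rewrite twistedE Ea' Ec' subrK.
  + case=> -[a' c']; rewrite twistedE => -[<- <-].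
    by rewrite linearD dA_dA add0r th_compat dC_dC.
- move=> Q projQ j ph ph0.
  pose phA := compL ph (inlL (PA (j + 1)) (PC (j + 1))).
  pose phC := compL ph (inrL (PA (j + 1)) (PC (j + 1))).
  have [qA HqA] : exists qA : {linear PA (j + 1 + 1) -> Q},
      forall a, qA (dA (j + 1) a) = phA a.
    by apply: homA => // a; rewrite /= -(ph0 (a, 0)) twistedE linear0 addr0 linear0.
  have phC'0 c : (phC \- compL qA (th (j + 1)) : {linear _ -> _}) (dC j c) = 0.
    have dAth : th (j + 1) (dC j c) = - dA (j + 1) (th j c).
      by apply/eqP; rewrite -addr_eq0 (addrC (th (j + 1) _)) th_compat.
    rewrite /= dAth linearN HqA opprK /= -(ph0 (0, c)) twistedE linear0 add0r.
    by rewrite addrC -linear_prod_split.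
  have [qC HqC] := homC Q projQ j _ phC'0.
  exists (copairL qA qC) => -[a c]; rewrite twistedE /= linearD HqA HqC /=.
  by rewrite (addrC (ph (0, c))) addrA addrK -linear_prod_split.
Qed.
End TwistedSum.

(* For [0 -> A -> B -> C -> 0] with complete
   resolutions [PA] and [PC], the embedding [B -> PA 1 * PC 1] is built from
   an extension [alpha] of [A -> PA 1] (by [gp_extend]) and [C -> PC 1]; it
   identifies [B] with the image of [d 0] in a twisted sum of [PA] and [PC]. *)
Lemma gp_extension (A B C : lmodType R) (i : {linear A -> B}) (p : {linear B -> C}) :
  short_exact i p -> gorenstein_projective A -> gorenstein_projective C ->
  gorenstein_projective B.
Proof.
move=> ses /gp_data [PA [dA [hA [pA [TA_A hA_inj hpA pA_surj hA_im]]]]].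
move=> GC; have := GC => /gp_data [PC [dC [hC [pC [TA_C hC_inj hpC pC_surj _]]]]].
have [i_inj p_surj p_ex] := ses.
have [[projA _ _] [projC _ homC]] := (TA_A, TA_C).
have [beta Hbeta] : exists beta : {linear PC 0 -> B}, forall c, p (beta c) = pC c.
  by apply: projective_lift => // c; exact: p_surj.
have [alpha Halpha] := gp_extend ses GC (projA 1) hA.
pose psi : twisting PA PC 0 := compL alpha beta.
have psi_cycle z : dA 1 (psi (dC (-1) z)) = 0.
  have /p_ex [a Ea] : p (beta (dC (-1) z)) = 0.
    by rewrite Hbeta; apply: hC_inj; rewrite hpC linear0; exact: (dC_dC TA_C z).
  by apply/hA_im; exists a; rewrite /= -Ea Halpha.
have [th1 Hth1] : exists th1 : twisting PA PC (0 + 1),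
    forall c, th1 (dC 0 c) = - dA 1 (psi c).
  apply: (homC _ (projA _) (-1) (\- compL (dA 1) psi : {linear _ -> _})) => z.
  by rewrite /= psi_cycle oppr0.
have compat01 : twist_compatible dA dC psi th1 by move=> c; rewrite Hth1 subrr.
have [th [th0 th_compat]] := twist_family TA_A TA_C compat01.
pose hB := pairL alpha (compL hC p).
have decomp b : exists x c, b = beta c + i (pA x).
  have [c Hc] := pC_surj (p b).
  have /p_ex [a Ea] : p (b - beta c) = 0 by rewrite linearB /= Hbeta Hc subrr.
  by have [x Ex] := pA_surj a; exists x, c; rewrite Ex Ea addrC subrK.
have hB_d0 x c : twisted dA dC th 0 (x, c) = hB (beta c + i (pA x)).
  rewrite twistedE th0 /= linearD Halpha hpA (addrC (dA 0 x)); congr (_, _).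
  by rewrite linearD (short_exact_comp _ ses) addr0 Hbeta hpC.
exists (fun j => (PA j * PC j)%type), (twisted dA dC th); split.
  exact: twisted_totally_acyclic.
exists hB; split.
- apply: raddf_inj => b hB0.
  have [/= alpha0 /= hCp0] := (congr1 fst hB0, congr1 snd hB0).
  have /p_ex [a Ea] : p b = 0 by apply: hC_inj; rewrite hCp0 linear0.
  by move: alpha0; rewrite -Ea Halpha -(linear0 hA) => /hA_inj ->; rewrite linear0.
- move=> y; split=> [[b <-]|[[x c] <-]]; last by exists (beta c + i (pA x)); rewrite hB_d0.
  by have [x [c ->]] := decomp b; exists (x, c); rewrite hB_d0.
Qed.

Lemma short_exact_prod (A C : lmodType R) : short_exact (inlL A C) (sndL A C).
Proof.
split=> [x y [] //|c|[a c]]; first by exists (0, c).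
rewrite /=; split=> [->|[a' [_ <-]]] //; by exists a.
Qed.

Lemma gp_prod (A C : lmodType R) :
  gorenstein_projective A -> gorenstein_projective C ->
  gorenstein_projective (A * C)%type.
Proof. exact: gp_extension (short_exact_prod A C). Qed.

End GorensteinBasics.

Section Resolutions.
Variable R : pzRingType.

Definition gp_at_resolution (M : lmodType R) (n t : nat) : Prop :=
  exists (X : nat -> lmodType R) (d : forall k : nat, {linear X k.+1 -> X k})
         (e : {linear X 0%N -> M}),
    exact_resolution n d e /\ gorenstein_projective (X t) /\
    forall i : nat, (i <= n)%N -> i <> t -> projective (X i).

Definition zero_module : lmodType R := 'M[R]_(0, 0).

Lemma zero_module_eq0 (x : zero_module) : x = 0.
Proof. by rewrite [x]flatmx0. Qed.

Lemma gp_at_resolution0 (G : lmodType R) :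
  gorenstein_projective G -> gp_at_resolution G 0 0.
Proof.
move=> GG.
pose X (k : nat) : lmodType R := if k is 0 then G else zero_module.
exists X, (fun k => zeroL (X k.+1) (X k)), (idL G); split; last first.
  by split => // -[|j] // _.
split.
- by move=> [|k] // _ x; exact: zero_module_eq0.
- by move=> m; exists m.
- by move=> x /=; split => [->|[y <-]] //; exists 0.
- by move=> k x; split => // _; exists 0; rewrite [RHS]zero_module_eq0.
Qed.

Lemma gp_at_resolution0_gp (M : lmodType R) :
  gp_at_resolution M 0 0 -> gorenstein_projective M.
Proof.
case=> X [d [e [[X_vanish e_surj e_ex _] [GX _]]]].
apply: (gp_iso (f := e)) => //; apply: raddf_inj => x /e_ex [y <-].
by rewrite (X_vanish 1%N erefl y) linear0.
Qed.

Lemma splice (K X0 M : lmodType R) (i : {linear K -> X0}) (q : {linear X0 -> M}) n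
  (X : nat -> lmodType R) (d : forall k : nat, {linear X k.+1 -> X k})
  (e : {linear X 0%N -> K}) :
  short_exact i q -> exact_resolution n d e ->
  exists (X' : nat -> lmodType R) (d' : forall k : nat, {linear X' k.+1 -> X' k})
         (e' : {linear X' 0%N -> M}),
    exact_resolution n.+1 d' e' /\ X' 0%N = X0 /\ forall k, X' k.+1 = X k.
Proof.
move=> [i_inj q_surj q_ex] [X_vanish e_surj e_ex d_ex].
pose X' (k : nat) : lmodType R := if k is k'.+1 then X k' else X0.
pose d' (k : nat) : {linear X' k.+1 -> X' k} :=
  match k return {linear X' k.+1 -> X' k} with 0 => compL i e | k'.+1 => d k' end.
exists X', d', q; split => //; split => //.
- by move=> [|k] // Hk x; exact: X_vanish.
- move=> x; rewrite q_ex; split=> -[y <-]; last by exists (e y).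
  by have [z <-] := e_surj y; exists z.
- move=> [|k] x /=; last exact: d_ex.
  split=> [ix0|/e_ex ->]; last by rewrite linear0.
  by apply/e_ex; apply: i_inj; rewrite ix0 linear0.
Qed.

Lemma unsplice n (M : lmodType R) (X : nat -> lmodType R)
  (d : forall k : nat, {linear X k.+1 -> X k}) (e : {linear X 0%N -> M}) :
  exact_resolution n.+1 d e ->
  exists (K : lmodType R) (i : {linear K -> X 0%N}) (e1 : {linear X 1%N -> K}),
    short_exact i e /\ exact_resolution n (fun k => d k.+1) e1.
Proof.
move=> [X_vanish e_surj e_ex d_ex].
have [e1 He1] : exists e1 : {linear X 1%N -> ker e}, forall x, ker_incl e (e1 x) = d 0%N x.
  apply: factor_through_mono; first exact: ker_incl_inj.
  by move=> x; apply/ker_incl_image/e_ex; exists x.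
exists (ker e), (ker_incl e), e1; split; first exact: kernel_short_exact.
split => // [k Hk x|y|x]; first exact: X_vanish.
- have [x Hx] := (e_ex _).1 (ker_inclK y).
  by exists x; apply: ker_incl_inj; rewrite He1.
- rewrite -(d_ex 0%N) -He1 -(linear0 (ker_incl e)).
  by split=> [->|/ker_incl_inj].
Qed.

Lemma gp_at_splice (K X0 M : lmodType R) (i : {linear K -> X0}) (q : {linear X0 -> M}) n t :
  short_exact i q -> projective X0 -> gp_at_resolution K n t ->
  gp_at_resolution M n.+1 t.+1.
Proof.
move=> ses projX0 [X [d [e [res [GX PX]]]]].
have [X' [d' [e' [res' [X'0 X'S]]]]] := splice ses res.
exists X', d', e'; split => //; split; first by rewrite X'S.
move=> [|j] Hj jt; first by rewrite X'0.
by rewrite X'S; apply: PX => // jt'; apply: jt; rewrite jt'.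
Qed.

Lemma gp_at_unsplice (M : lmodType R) n t : gp_at_resolution M n.+1 t.+1 ->
  exists (K X0 : lmodType R) (i : {linear K -> X0}) (q : {linear X0 -> M}),
    [/\ short_exact i q, projective X0 & gp_at_resolution K n t].
Proof.
move=> [X [d [e [res [GX PX]]]]].
have [K [i [e1 [ses res1]]]] := unsplice res.
exists K, (X 0%N), i, e; split => //; first exact: PX.
exists (fun k => X k.+1), (fun k => d k.+1), e1; split => //; split => //.
by move=> j Hj jt; apply: PX => // -[jt'].
Qed.

Lemma gpd_unsplice (M : lmodType R) n : Gpd_le M n.+1 ->
  exists (K X0 : lmodType R) (i : {linear K -> X0}) (q : {linear X0 -> M}),
    [/\ short_exact i q, gorenstein_projective X0 & Gpd_le K n].
Proof.
move=> [X [d [e [res GX]]]].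
have [K [i [e1 [ses res1]]]] := unsplice res.
exists K, (X 0%N), i, e; split => //; first exact: GX.
by exists (fun k => X k.+1), (fun k => d k.+1), e1; split => // j Hj; apply: GX.
Qed.

End Resolutions.

Section GorensteinDimension.
Variable R : pzRingType.

Lemma gp_at_resolution_top (L : lmodType R) m :
  gorenstein_projective L -> gp_at_resolution L m m.
Proof.
elim: m L => [|m IH] L GL; first exact: gp_at_resolution0.
have [P0 [L' [i [p [projP0 GL' ses]]]]] := gp_syzygy GL.
exact: gp_at_splice ses projP0 (IH _ GL').
Qed.

(* One step of the horseshoe lemma: covers [X0 -> L] and [Y0 -> K] of the
   ends of [0 -> L -> K' -> K -> 0], with [Y0] projective, combine into a
   cover [X0 * Y0 -> K'] whose kernel is an extension of the two kernels. *)
Lemma horseshoe_step (L K' K X0 Y0 L1 K1 : lmodType R)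
  (i : {linear L -> K'}) (p : {linear K' -> K})
  (iL : {linear L1 -> X0}) (qL : {linear X0 -> L})
  (iK : {linear K1 -> Y0}) (qK : {linear Y0 -> K}) :
  short_exact i p -> short_exact iL qL -> short_exact iK qK -> projective Y0 ->
  exists (E : {linear (X0 * Y0)%type -> K'}) (a : {linear L1 -> ker E})
         (b : {linear ker E -> K1}),
    (forall k, exists z, E z = k) /\ short_exact a b.
Proof.
move=> [i_inj p_surj p_ex] [iL_inj qL_surj qL_ex] [iK_inj qK_surj qK_ex] projY0.
have [sg Hsg] : exists sg : {linear Y0 -> K'}, forall y, p (sg y) = qK y.
  by apply: projective_lift => // y; exact: p_surj.
have pi0 l : p (i l) = 0 by apply/p_ex; exists l.
have qLiL l : qL (iL l) = 0 by apply/qL_ex; exists l.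
pose E := copairL (compL i qL) sg.
have [a Ha] : exists a : {linear L1 -> ker E}, forall l, ker_incl E (a l) = (iL l, 0).
  apply: (factor_through_mono (g := compL (inlL X0 Y0) iL)); first exact: ker_incl_inj.
  by move=> l; apply/ker_incl_image; rewrite /= qLiL !linear0 addr0.
have [b Hb] : exists b : {linear ker E -> K1}, forall z, iK (b z) = (ker_incl E z).2.
  apply: (factor_through_mono (g := compL (sndL X0 Y0) (ker_incl E))) => //.
  move=> z; apply/qK_ex; rewrite /= -Hsg.
  by have := ker_inclK z; rewrite /= => /(congr1 p); rewrite linearD pi0 add0r linear0.
exists E, a, b; split; last split.
- move=> k; have [y Hy] := qK_surj (p k).
  have /p_ex [l Hl] : p (k - sg y) = 0 by rewrite linearB /= Hsg Hy subrr.
  by have [x Hx] := qL_surj l; exists (x, y); rewrite /= Hx Hl subrK.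
- apply: raddf_inj => l /(congr1 (ker_incl E)); rewrite Ha linear0.
  by move/(congr1 fst) => /= /eqP; rewrite raddf_eq0 // => /eqP.
- move=> k; have /p_ex [l Hl] : p (sg (iK k)) = 0.
    by rewrite Hsg; apply/qK_ex; exists k.
  have [x Hx] := qL_surj l.
  have /ker_incl_image [z Hz] : E (- x, iK k) = 0 by rewrite /= linearN Hx linearN Hl addNr.
  by exists z; apply: iK_inj; rewrite Hb Hz.
- move=> [[x y] Hz]; have Exy : i (qL x) + sg y = 0 by apply/eqP; rewrite unfold_in in Hz.
  split=> [bz0|[l <-]]; last by apply: iK_inj; rewrite Hb Ha linear0.
  have y0 : y = 0 by have := Hb (exist _ (x, y) Hz); rewrite bz0 linear0.
  have /qL_ex [l Hl] : qL x = 0 by apply: i_inj; rewrite linear0 -Exy y0 linear0 addr0.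
  by exists l; apply: ker_incl_inj; rewrite Ha Hl /= y0.
Qed.

Lemma horseshoe m (L K' K : lmodType R) (i : {linear L -> K'}) (p : {linear K' -> K}) :
  short_exact i p -> gp_at_resolution L m m -> gp_at_resolution K m m ->
  gp_at_resolution K' m m.
Proof.
elim: m L K' K i p => [|m IH] L K' K i p ses RL RK.
  by apply/gp_at_resolution0/(gp_extension ses); exact: gp_at_resolution0_gp.
have [L1 [X0 [iL [qL [sesL projX0 RL1]]]]] := gp_at_unsplice RL.
have [K1 [Y0 [iK [qK [sesK projY0 RK1]]]]] := gp_at_unsplice RK.
have [E [a [b [E_surj sesE]]]] := horseshoe_step ses sesL sesK projY0.
exact: gp_at_splice (kernel_short_exact E_surj) (projective_prod projX0 projY0)
  (IH _ _ _ _ _ sesE RL1 RK1).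
Qed.

Lemma kernel_of_composite (L P0 X0 K M : lmodType R)
  (j : {linear L -> P0}) (p : {linear P0 -> X0})
  (i : {linear K -> X0}) (q : {linear X0 -> M}) :
  short_exact j p -> short_exact i q ->
  exists (a : {linear L -> ker (compL q p)}) (b : {linear ker (compL q p) -> K}),
    (forall m, exists x, compL q p x = m) /\ short_exact a b.
Proof.
move=> [j_inj p_surj p_ex] [i_inj q_surj q_ex].
have pj0 l : p (j l) = 0 by apply/p_ex; exists l.
have [a Ha] : exists a : {linear L -> ker (compL q p)}, forall l, ker_incl _ (a l) = j l.
  apply: factor_through_mono => [|l]; first exact: ker_incl_inj.
  by apply/ker_incl_image; rewrite /= pj0 linear0.
have [b Hb] : exists b : {linear ker (compL q p) -> K},
    forall z, i (b z) = p (ker_incl _ z).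
  apply: (factor_through_mono (g := compL p (ker_incl _))) => // z.
  by apply/q_ex; exact: (ker_inclK z).
exists a, b; split; last split.
- by move=> m; have [x <-] := q_surj m; have [y <-] := p_surj x; exists y.
- by apply: raddf_inj => l /(congr1 (ker_incl _)); rewrite Ha linear0 -(linear0 j) => /j_inj.
- move=> k; have [x Hx] := p_surj (i k).
  have /ker_incl_image [z Hz] : compL q p x = 0 by rewrite /= Hx; apply/q_ex; exists k.
  by exists z; apply: i_inj; rewrite Hb Hz.
- move=> z; split=> [bz0|[l <-]]; last by apply: i_inj; rewrite Hb Ha pj0 linear0.
  have /p_ex [l Hl] : p (ker_incl _ z) = 0 by rewrite -Hb bz0 linear0.
  by exists l; apply: ker_incl_inj; rewrite Ha.
Qed.

Lemma gpd_gp_at_top (M : lmodType R) n : Gpd_le M n -> gp_at_resolution M n n.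
Proof.
elim: n M => [|n IH] M.
  case=> X [d [e [res GX]]]; exists X, d, e; split => //; split; first exact: GX.
  by move=> [|j].
case/gpd_unsplice => K [X0 [i [q [ses GX0 GK]]]].
have [P0 [L [j [p [projP0 GL sesP]]]]] := gp_syzygy GX0.
have [a [b [F_surj sesF]]] := kernel_of_composite sesP ses.
exact: gp_at_splice (kernel_short_exact F_surj) projP0
  (horseshoe sesF (gp_at_resolution_top n GL) (IH _ GK)).
Qed.

(* Moving the Gorenstein projective term one step towards [M]: in an exact
   [X1 --d0--> X0 --e--> M -> 0] with [X1] Gorenstein projective and [X0]
   projective, embed [X1] in a projective [Q] with Gorenstein projective
   cokernel [G'] and extend [d0] to [sg : Q -> X0]; then
   [Q --(sg, pi)--> X0 * G' --(e, ph)--> M -> 0] is exact, with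
   [X0 * G'] Gorenstein projective and the same kernel on the left. *)
Lemma gp_swap (X1 X0 M : lmodType R) (d0 : {linear X1 -> X0}) (e : {linear X0 -> M}) :
  (forall m, exists x, e x = m) -> exact_at d0 e ->
  gorenstein_projective X1 -> projective X0 ->
  exists (Q Y0 : lmodType R) (io : {linear X1 -> Q}) (D : {linear Q -> Y0})
         (E : {linear Y0 -> M}),
    [/\ projective Q, gorenstein_projective Y0,
        (forall m, exists y, E y = m) /\ exact_at D E, injective io &
        forall q, D q = 0 <-> exists x, d0 x = 0 /\ io x = q].
Proof.
move=> e_surj e_ex GX1 projX0.
have [Q [G' [io [pi [projQ GG' ses]]]]] := gp_cosyzygy GX1.
have [sg Hsg] := gp_extend ses GG' projX0 d0.
have [io_inj pi_surj pi_ex] := ses.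
have ed0 x : e (d0 x) = 0 by apply/e_ex; exists x.
have [ph Hph] : exists ph : {linear G' -> M}, forall q, ph (pi q) = - e (sg q).
  apply: (factor_through_epi (g := \- compL e sg : {linear _ -> _})) => // q.
  by case/pi_ex => x <-; rewrite /= Hsg ed0 oppr0.
exists Q, (X0 * G')%type, io, (pairL sg pi), (copairL e ph); split => //.
- exact: gp_prod (projective_gp projX0) GG'.
- split=> [m|[x g] /=].
    by have [x <-] := e_surj m; exists (x, 0); rewrite /= linear0 addr0.
  split=> [exg0|[q [<- <-]]]; last by rewrite Hph subrr.
  have [q0 Eq0] := pi_surj g.
  have /e_ex [y Hy] : e (x - sg q0) = 0 by rewrite linearB /= -Hph Eq0.
  exists (q0 + io y); rewrite /= !linearD Hsg Hy (short_exact_comp _ ses) addr0 Eq0.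
  by rewrite addrC subrK.
- move=> q; split=> [Dq0|[x [dx0 <-]]]; last by rewrite /= Hsg dx0 (short_exact_comp _ ses).
  have [/= sgq0 /pi_ex [x Ex]] := (congr1 fst Dq0, congr1 snd Dq0).
  by exists x; rewrite -Hsg Ex.
Qed.
End GorensteinDimension.

Section MovingTheGorensteinTerm.
Variable R : pzRingType.

Lemma gp_at_down_base (M : lmodType R) n :
  gp_at_resolution M n.+1 1 -> gp_at_resolution M n.+1 0.
Proof.
case=> X [d [e [[X_vanish e_surj e_ex d_ex] [GX1 PX]]]].
have projX0 : projective (X 0%N) by apply: PX.
have [Q [Y0 [io [D [E [projQ GY0 [E_surj E_ex] io_inj D_ker]]]]]] :=
  gp_swap e_surj e_ex GX1 projX0.
pose X' (k : nat) : lmodType R :=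
  match k with 0 => Y0 | 1 => Q | k'.+2 => X k'.+2 end.
pose d' (k : nat) : {linear X' k.+1 -> X' k} :=
  match k return {linear X' k.+1 -> X' k} with
  | 0 => D | 1 => compL io (d 1%N) | k'.+2 => d k'.+2 end.
exists X', d', E; split; last split => //.
- split => //; first by move=> [|[|k]] // Hk; exact: X_vanish.
  move=> [|[|k]] x /=; last exact: d_ex.
  + rewrite D_ker; split=> [[y [dy0 <-]]|[z <-]].
      by have [z Hz] := (d_ex 0%N y).1 dy0; exists z; rewrite Hz.
    by exists (d 1%N z); split => //; apply/(d_ex 0%N); exists z.
  + by rewrite -(d_ex 1%N) -(linear0 io); split=> [/io_inj|->].
- by move=> [|[|k]] // Hk _; exact: PX.
Qed.

Lemma gp_at_down (M : lmodType R) n t :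
  (t < n)%N -> gp_at_resolution M n t.+1 -> gp_at_resolution M n t.
Proof.
elim: t M n => [|t IH] M [|n] // tn; first exact: gp_at_down_base.
case/gp_at_unsplice => K [X0 [i [q [ses projX0 RK]]]].
exact: gp_at_splice ses projX0 (IH _ _ tn RK).
Qed.

Lemma gp_at_lower (M : lmodType R) n t :
  (t <= n)%N -> gp_at_resolution M n n -> gp_at_resolution M n t.
Proof.
move=> tn Rn; rewrite -(subKn tn).
elim: (n - t)%N (leq_subr t n) => [|k IH] kn; first by rewrite subn0.
apply: gp_at_down; first by rewrite ltn_subrL (leq_trans (ltn0Sn k) kn).
by rewrite subnSK //; apply: IH; exact: ltnW.
Qed.
End MovingTheGorensteinTerm.

Theorem theorem2p6 (R : pzRingType) (M : lmodType R) (n : nat) :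
  Gpd_le M n <->
  (forall t : nat, (t <= n)%N ->
     exists (X : nat -> lmodType R) (d : forall k : nat, {linear X k.+1 -> X k})
            (e : {linear X 0%N -> M}),
       exact_resolution n d e /\
       gorenstein_projective (X t) /\
       forall i : nat, (i <= n)%N -> i <> t -> projective (X i)).
Proof.
split=> [GM t tn|H].
- exact: gp_at_lower tn (gpd_gp_at_top GM).
- have [X [d [e [res [GX0 PX]]]]] := H 0%N (leq0n n).
  exists X, d, e; split=> // -[|i] ni //.
  exact/projective_gp/PX.
Qed.
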